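(* Fix $d\ge 1$. There is a constant $c_d$ depending only on $d$ such that for every 2-dimensional binary matrix $X$ and every partition $\{x_i\}$ of $X$ into sub-matrices of size at most $d\times d$, $$\big|BDM_{\{x_i\}}(X)-H_{\{x_i\}}(X)\big|\le c_d\log(|\{x_i\}|),$$ that is, $|BDM_{\{x_i\}}(X)-H_{\{x_i\}}(X)|=O(\log|\{x_i\}|)$.
   Context: For a partition $\{x_i\}$ of $X$, $|\{x_i\}|$ is the number of blocks, and $Adj(X)_{\{x_i\}}$ is the set of pairs $(r_j,n_j)$ with $r_j$ the distinct blocks and $n_j$ the number of blocks equal to $r_j$ (so $\sum_j n_j=|\{x_i\}|$). $CTM(s)=-\log_2 D(t,k)(s)$, where $D(t,k)(s)$ is the fraction of halting $t$-state $k$-symbol (2-dimensional) Turing machines started on an empty tape that output $s$; CTM values are assumed available (finite) for all binary matrices of size at most $d\times d$. $BDM_{\{x_i\}}(X)=\sum_{(r_j,n_j)\in Adj(X)_{\{x_i\}}}(CTM(r_j)+\log_2 n_j)$. The block Shannon entropy is $H_{\{x_i\}}(X)=-\sum_{(r_j,n_j)\in Adj(X)_{\{x_i\}}}\frac{n_j}{|\{x_i\}|}\log_2\frac{n_j}{|\{x_i\}|}$, each block $r_j$ being treated as a symbol. *)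

From Stdlib Require Import Reals List Arith.
Import ListNotations.
Open Scope R_scope.

Definition log2 (x : R) : R := ln x / ln 2.

(** A 2-dimensional binary matrix of size m x n is given by its entry function
    [X : nat -> nat -> bool] (only entries (i,j) with i < m, j < n matter).
    A block (sub-matrix content) is represented as the list of its rows. *)
Definition block := list (list bool).

Record rect := Rect { row0 : nat; col0 : nat; height : nat; width : nat }.

Definition covers (r : rect) (i j : nat) : bool :=
  (row0 r <=? i) && (i <? row0 r + height r)%nat &&
  (col0 r <=? j) && (j <? col0 r + width r)%nat.

Definition content (X : nat -> nat -> bool) (r : rect) : block :=
  map (fun a => map (fun b => X (row0 r + a)%nat (col0 r + b)%nat) (seq 0 (width r)))
      (seq 0 (height r)).

Definition is_block_partition (d m n : nat) (P : list rect) : Prop :=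
  (forall r, In r P ->
     (1 <= height r)%nat /\ (height r <= d)%nat /\
     (1 <= width r)%nat /\ (width r <= d)%nat /\
     (row0 r + height r <= m)%nat /\ (col0 r + width r <= n)%nat) /\
  (forall i j, (i < m)%nat -> (j < n)%nat ->
     length (filter (fun r => covers r i j) P) = 1%nat).

Definition block_eq_dec : forall a b : block, {a = b} + {a <> b} :=
  list_eq_dec (list_eq_dec Bool.bool_dec).

(** The blocks of the partition (with repetitions), |{x_i}| = length. *)
Definition blocks (X : nat -> nat -> bool) (P : list rect) : list block :=
  map (content X) P.

Definition distinct_blocks (X : nat -> nat -> bool) (P : list rect) : list block :=
  nodup block_eq_dec (blocks X P).

Definition mult (X : nat -> nat -> bool) (P : list rect) (b : block) : nat :=
  count_occ block_eq_dec (blocks X P) b.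

Definition Rsum (l : list R) : R := fold_right Rplus 0 l.

Definition BDM (CTM : block -> R) (X : nat -> nat -> bool) (P : list rect) : R :=
  Rsum (map (fun b => CTM b + log2 (INR (mult X P b))) (distinct_blocks X P)).

Definition Hblock (X : nat -> nat -> bool) (P : list rect) : R :=
  - Rsum (map (fun b => let p := INR (mult X P b) / INR (length P) in p * log2 p)
              (distinct_blocks X P)).

From Stdlib Require Import Reals List Lra Lia.
Import ListNotations.
Open Scope R_scope.

(* Blocks of size at most d x d form a finite set (independent of X), so a
   partition has at most a constant number K_d of distinct blocks and CTM is
   bounded on them by a constant M_d.  With N = |{x_i}|, the contribution
   log2 n_j + (n_j/N) log2 (n_j/N) of each distinct block to BDM - H lies in
   [-log2 N, log2 N], hence |BDM - H| <= K_d (M_d + log2 N) = O(log N). *)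

Lemma ln2_pos : 0 < ln 2.
Proof. pose proof ln_lt_2; lra. Qed.

Lemma log2_1 : log2 1 = 0.
Proof. unfold log2; rewrite ln_1; lra. Qed.

Lemma log2_2 : log2 2 = 1.
Proof. unfold log2; pose proof ln2_pos; field; lra. Qed.

Lemma log2_le (x y : R) : 0 < x -> x <= y -> log2 x <= log2 y.
Proof.
  intros Hx [Hxy | <-]; [| lra].
  unfold log2; apply Rmult_le_compat_r.
  - left; apply Rinv_0_lt_compat, ln2_pos.
  - left; apply ln_increasing; assumption.
Qed.

Lemma log2_div (x y : R) : 0 < x -> 0 < y -> log2 (x / y) = log2 x - log2 y.
Proof.
  intros Hx Hy; unfold log2, Rdiv.
  rewrite ln_mult, ln_Rinv; [lra | assumption | assumption | now apply Rinv_0_lt_compat].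
Qed.

(* With p = n/N in (0,1] the expression is (1+p) log2 n - p log2 N, and 0 <= log2 n <= log2 N. *)
Lemma Rabs_log2_add_plogp_le (n N : R) :
  1 <= n -> n <= N -> Rabs (log2 n + (n / N) * log2 (n / N)) <= log2 N.
Proof.
  intros Hn HnN.
  assert (Hlog_n : 0 <= log2 n) by (rewrite <- log2_1; apply log2_le; lra).
  assert (Hlog_nN : log2 n <= log2 N) by (apply log2_le; lra).
  assert (Hp_pos : 0 < n / N) by (apply Rdiv_lt_0_compat; lra).
  assert (Hp_le1 : n / N <= 1).
  { apply (Rmult_le_reg_r N); [lra |].
    unfold Rdiv; rewrite Rmult_assoc, Rinv_l; lra. }
  rewrite log2_div by lra.
  apply Rabs_le; split; nra.
Qed.

Section Lists.
Variable A : Type.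

Lemma Rsum_map_add (f g : A -> R) (l : list A) :
  Rsum (map (fun x => f x + g x) l) = Rsum (map f l) + Rsum (map g l).
Proof. induction l; simpl; lra. Qed.

Lemma Rabs_Rsum_map_le (g : A -> R) (l : list A) (B : R) :
  (forall x, In x l -> Rabs (g x) <= B) ->
  Rabs (Rsum (map g l)) <= INR (length l) * B.
Proof.
  induction l as [| a l IH]; intros Hg.
  - simpl; rewrite Rabs_R0; lra.
  - change (Rabs (g a + Rsum (map g l)) <= INR (S (length l)) * B).
    rewrite S_INR.
    eapply Rle_trans; [apply Rabs_triang |].
    assert (Ha := Hg a (or_introl eq_refl)).
    assert (Hl : Rabs (Rsum (map g l)) <= INR (length l) * B)
      by (apply IH; intros x Hx; apply Hg; right; exact Hx).
    lra.
Qed.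

Lemma Rabs_bounded_on_list (f : A -> R) (l : list A) :
  exists M, forall x, In x l -> Rabs (f x) <= M.
Proof.
  induction l as [| a l [M Hl]].
  - exists 0; intros x [].
  - exists (Rmax (Rabs (f a)) M); intros x [<- | Hx]; [apply Rmax_l |].
    eapply Rle_trans; [apply Hl, Hx | apply Rmax_r].
Qed.

End Lists.

Fixpoint lists_upto {T : Type} (l : list T) (k : nat) : list (list T) :=
  match k with
  | O => [[]]
  | S k => [] :: flat_map (fun x => map (cons x) (lists_upto l k)) l
  end.

Lemma In_lists_upto {T : Type} (l : list T) (k : nat) (s : list T) :
  (length s <= k)%nat -> incl s l -> In s (lists_upto l k).
Proof.
  revert s; induction k as [| k IH]; intros [| x s] Hs Hincl; simpl in *;
    try lia; auto.
  right; apply in_flat_map; exists x; split.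
  - apply Hincl; left; reflexivity.
  - apply in_map, IH; [lia | intros y Hy; apply Hincl; right; exact Hy].
Qed.

(* Lists every block of size at most d x d (and also some ragged row lists). *)
Definition all_blocks (d : nat) : list block :=
  lists_upto (lists_upto [true; false] d) d.

Lemma In_content_all_blocks (d : nat) (X : nat -> nat -> bool) (r : rect) :
  (height r <= d)%nat -> (width r <= d)%nat -> In (content X r) (all_blocks d).
Proof.
  intros Hh Hw; unfold content; apply In_lists_upto.
  - rewrite length_map, length_seq; exact Hh.
  - intros row Hrow; apply in_map_iff in Hrow as [a [<- _]].
    apply In_lists_upto.
    + rewrite length_map, length_seq; exact Hw.
    + intros [|] _; simpl; auto.
Qed.

Section Partition.
Variables (d m n : nat) (X : nat -> nat -> bool) (P : list rect).
Hypothesis HP : is_block_partition d m n P.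

Lemma distinct_blocks_incl_all_blocks : incl (distinct_blocks X P) (all_blocks d).
Proof.
  intros b Hb; apply nodup_In, in_map_iff in Hb as [r [<- Hr]].
  destruct (proj1 HP r Hr) as [_ [Hh [_ [Hw _]]]].
  apply In_content_all_blocks; assumption.
Qed.

Lemma length_distinct_blocks_le :
  (length (distinct_blocks X P) <= length (all_blocks d))%nat.
Proof.
  apply NoDup_incl_length; [apply NoDup_nodup | apply distinct_blocks_incl_all_blocks].
Qed.

End Partition.

Lemma mult_distinct_block_bounds (X : nat -> nat -> bool) (P : list rect) (b : block) :
  In b (distinct_blocks X P) -> (1 <= mult X P b <= length P)%nat.
Proof.
  intros Hb; apply nodup_In, (count_occ_In block_eq_dec) in Hb.
  pose proof (count_occ_bound block_eq_dec b (blocks X P)) as Hbound.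
  unfold mult, blocks in *; rewrite length_map in Hbound; lia.
Qed.

Lemma BDM_sub_Hblock (CTM : block -> R) (X : nat -> nat -> bool) (P : list rect) :
  BDM CTM X P - Hblock X P =
  Rsum (map (fun b => CTM b + (log2 (INR (mult X P b))
                     + INR (mult X P b) / INR (length P)
                       * log2 (INR (mult X P b) / INR (length P))))
            (distinct_blocks X P)).
Proof.
  unfold BDM, Hblock; rewrite Rsum_map_add.
  induction (distinct_blocks X P); simpl; lra.
Qed.

Lemma Rabs_BDM_sub_Hblock_le (d m n : nat) (CTM : block -> R) (M : R)
    (X : nat -> nat -> bool) (P : list rect) :
  is_block_partition d m n P -> (1 <= length P)%nat ->
  (forall b, In b (all_blocks d) -> Rabs (CTM b) <= M) ->
  Rabs (BDM CTM X P - Hblock X P)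
    <= INR (length (all_blocks d)) * (M + log2 (INR (length P))).
Proof.
  intros HP HN HM; rewrite BDM_sub_Hblock.
  set (N := INR (length P)).
  assert (HM0 : 0 <= M).
  { eapply Rle_trans; [apply Rabs_pos | apply (HM [])].
    apply In_lists_upto; [simpl; lia | intros x []]. }
  assert (HlogN : 0 <= log2 N).
  { rewrite <- log2_1; apply log2_le; [lra |].
    apply (le_INR 1); exact HN. }
  eapply Rle_trans.
  - apply Rabs_Rsum_map_le with (B := M + log2 N).
    intros b Hb.
    destruct (mult_distinct_block_bounds X P b Hb) as [H1 HN'].
    eapply Rle_trans; [apply Rabs_triang |].
    apply Rplus_le_compat; [apply HM, (distinct_blocks_incl_all_blocks d m n X P HP), Hb |].
    apply Rabs_log2_add_plogp_le; [apply (le_INR 1) | apply le_INR]; assumption.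
  - apply Rmult_le_compat_r; [lra |].
    apply le_INR, (length_distinct_blocks_le d m n X P HP).
Qed.

Theorem proposition2 (d : nat) (hd : (1 <= d)%nat) (CTM : block -> R) :
  exists (c : R) (N0 : nat),
    forall (m n : nat) (X : nat -> nat -> bool) (P : list rect),
      is_block_partition d m n P ->
      (N0 <= length P)%nat ->
      Rabs (BDM CTM X P - Hblock X P) <= c * log2 (INR (length P)).
Proof.
  destruct (Rabs_bounded_on_list _ CTM (all_blocks d)) as [M HM].
  set (K := INR (length (all_blocks d))).
  exists (K * (Rabs M + 1)), 2%nat.
  intros m n X P HP HN.
  assert (HlogN : 1 <= log2 (INR (length P))).
  { rewrite <- log2_2; apply log2_le; [lra |]; apply (le_INR 2); exact HN. }
  assert (HK : 0 <= K) by apply pos_INR.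
  eapply Rle_trans; [apply (Rabs_BDM_sub_Hblock_le d m n CTM M X P HP); [lia | exact HM] |].
  fold K; rewrite Rmult_assoc; apply Rmult_le_compat_l; [exact HK |].
  pose proof (Rle_abs M); pose proof (Rabs_pos M); nra.
Qed.
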